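(* Let $\mathcal{L}$ be a $d$-colex, let $1\le k<d$, and let $C\subset\mathbb{Z}_{d+1}$ be a set of $k+1$ colors. Then the restriction maps $\pi_C^{(0)},\pi_C^{(1)},\pi_C^{(2)}$ form a morphism of chain complexes from $C_{d-k-1}(\mathcal{L})\xrightarrow{\partial_{d-k-1,d}}C_d(\mathcal{L})\xrightarrow{\partial_{d,k-1}}C_{k-1}(\mathcal{L})$ to $C_{k+1}(\mathcal{L}_C)\xrightarrow{\partial^C_{k+1}}C_k(\mathcal{L}_C)\xrightarrow{\partial^C_k}C_{k-1}(\mathcal{L}_C)$, i.e. $\pi^{(0)}_C\circ\partial_{d,k-1}=\partial^C_k\circ\pi^{(1)}_C$ on $C_d(\mathcal{L})$ and $\pi^{(1)}_C\circ\partial_{d-k-1,d}=\partial^C_{k+1}\circ\pi^{(2)}_C$ on $C_{d-k-1}(\mathcal{L})$.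
   Context: Conventions: all complexes are finite. For a simplicial complex $\mathcal{L}$, $\Delta_k(\mathcal{L})$ is its set of $k$-simplices, and for a simplex $\kappa$, $\Delta_l(\kappa)$ is the set of its $l$-dimensional faces. $C_k(\mathcal{L})$ is the $\mathbb{F}_2$-vector space with basis $\Delta_k(\mathcal{L})$; chains are identified with subsets. $\partial_k\kappa=\sum_{\nu\in\Delta_{k-1}(\kappa)}\nu$. For a $j$-simplex $\kappa$ and $n\ge j$, $\mathrm{Star}_n(\kappa)=\{\nu\in\Delta_n(\mathcal{L}):\kappa\in\Delta_j(\nu)\}$; for $n\le d-j-1$, $\mathrm{Link}_n(\kappa)=\{\nu\in\Delta_n(\mathcal{L}):\nu\cap\kappa=\emptyset\text{ and some }d\text{-simplex contains both}\}$, regarded as an $n$-chain. Generalized boundary maps: for $j\ne n$, $\partial_{j,n}:C_j(\mathcal{L})\to C_n(\mathcal{L})$ is linear with $\partial_{j,n}\kappa=\sum_{\nu\in\Delta_n(\kappa)}\nu$ if $j>n$ and $\partial_{j,n}\kappa=\sum_{\nu\in\mathrm{Star}_n(\kappa)}\nu$ if $j<n$. Colexes: a colorable $0$-ball is a point and a $0$-colex is a finite set of points. For $d\ge1$, a colorable $d$-ball $\mathcal{B}_v$ is the set of $d$-simplices $\{v*\delta:\delta\in\Delta_{d-1}(K)\}$ (where $v*\delta$ is the simplex spanned by $v$ and the vertices of $\delta$) for a $(d-1)$-colex $K$ homeomorphic to the $(d-1)$-sphere and a vertex $v\notin K$; its boundary is $\partial\mathcal{B}_v=K$. For $d\ge1$,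 a $d$-colex (without boundary) $\mathcal{L}$ is a homogeneous simplicial $d$-complex which is a finite union of colorable $d$-balls (sharing no $d$-simplex) glued along their boundaries so that every $(d-1)$-simplex lies in the boundary of exactly two distinct balls, and whose vertices are $(d+1)$-colorable: there is $\mathrm{col}:\Delta_0(\mathcal{L})\to\mathbb{Z}_{d+1}=\{0,\dots,d\}$ assigning distinct colors to the endpoints of every edge. Standing structure: for every vertex $v$, the set of $d$-simplices containing $v$ is the colorable $d$-ball centered at $v$. For a simplex or chain $\alpha$, $\mathrm{col}(\alpha)$ is the set of colors of its vertices. Restricted lattice: for $|C|=k+1$, $\mathcal{L}_C$ is the cell $(k+1)$-complex whose $i$-cells ($0\le i\le k$) are the $i$-simplices $\iota$ of $\mathcal{L}$ with $\mathrm{col}(\iota)\subseteq C$, and whose $(k+1)$-cells are symbols $\Xi(\delta)$, one for each $(d-k-1)$-simplex $\delta$ of $\mathcal{L}$ with $\mathrm{col}(\delta)=\mathbb{Z}_{d+1}\setminus C$. $C_i(\mathcal{L}_C)$ is the $\mathbb{F}_2$-space on its $i$-cells; $\partial_i^C=\partial_i$ on $C_i(\mathcal{L}_C)$ for $1\le i\le k$, and $\partial^C_{k+1}\Xi(\delta)=\mathrm{Link}_k(\delta)$. Restriction maps (linear, defined on basis elements): $\pi^{(0)}_C:C_{k-1}(\mathcal{L})\to C_{k-1}(\mathcal{L}_C)$, $\pi^{(0)}_C(\mu)=\mu$ if $\mathrm{col}(\mu)\subset C$ and $0$ otherwise; $\pi^{(1)}_C:C_d(\mathcal{L})\to C_k(\mathcal{L}_C)$,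 $\pi^{(1)}_C(\delta)=\delta|_C$, the unique $k$-face of the $d$-simplex $\delta$ with color set $C$; $\pi^{(2)}_C:C_{d-k-1}(\mathcal{L})\to C_{k+1}(\mathcal{L}_C)$, $\pi^{(2)}_C(\nu)=\Xi(\nu)$ if $\mathrm{col}(\nu)=\mathbb{Z}_{d+1}\setminus C$ and $0$ otherwise. *)

From Stdlib Require Import Reals.
From mathcomp Require Import all_boot.

Set Implicit Arguments.
Unset Strict Implicit.
Unset Printing Implicit Defensive.

Section Complexes.
Variable V : finType.

(* A finite simplicial complex on the vertex type V is a set of nonempty
   vertex sets closed under taking nonempty subsets.  A j-simplex has j+1
   vertices. *)
Definition is_complex (L : {set {set V}}) : Prop :=
  set0 \notin L /\
  (forall s t : {set V}, s \in L -> t \subset s -> t != set0 -> t \in L).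

Definition simplices (L : {set {set V}}) (j : nat) : {set {set V}} :=
  [set s in L | #|s| == j.+1].

Definition faces_of (s : {set V}) (l : nat) : {set {set V}} :=
  [set t : {set V} | (t \subset s) && (#|t| == l.+1)].

Definition homogeneous (d : nat) (L : {set {set V}}) : Prop :=
  is_complex L /\
  (forall s, s \in L -> #|s| <= d.+1) /\
  (forall s, s \in L -> exists2 D, D \in simplices L d & s \subset D).

Definition is_vertex (L : {set {set V}}) (v : V) : bool := [set v] \in L.

Definition proper_coloring (n : nat) (L : {set {set V}}) (col : V -> 'I_n)
  : Prop :=
  forall u v : V, [set u; v] \in L -> u != v -> col u != col v.

(* the colorable ball v * K, as the set of its top simplices *)
Definition cone_top (v : V) (K : {set {set V}}) (n : nat) : {set {set V}} :=
  [set v |: t | t in simplices K n].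

Definition star (L : {set {set V}}) (n : nat) (s : {set V}) :=
  [set t in simplices L n | s \subset t].

Definition link (L : {set {set V}}) (d n : nat) (s : {set V}) :=
  [set t in simplices L n |
     [disjoint t & s] &&
     [exists D in simplices L d, (t \subset D) && (s \subset D)]].

Definition rsum (I : finType) (x : I -> R) : R := \big[Rplus/R0]_(i : I) x i.

(* points of the geometric realization |K| in the barycentric model R^V *)
Definition realization (K : {set {set V}}) (x : V -> R) : Prop :=
  (forall v, Rle R0 (x v)) /\ rsum x = R1 /\
  (exists2 s, s \in K & forall v, x v <> R0 -> v \in s).

End Complexes.

Definition sphere_pt (n : nat) (y : 'I_n.+1 -> R) : Prop :=
  rsum (fun i => Rmult (y i) (y i)) = R1.

(* continuity of f on A (for the sup-distance on finite-dimensional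
   coordinate spaces; all norms there are equivalent) *)
Definition cont_on (I J : finType) (A : (I -> R) -> Prop)
  (f : (I -> R) -> (J -> R)) : Prop :=
  forall x, A x -> forall eps, Rlt R0 eps ->
    exists2 delta, Rlt R0 delta &
      forall y, A y -> (forall i, Rlt (Rabs (Rminus (y i) (x i))) delta) ->
        forall j, Rlt (Rabs (Rminus (f y j) (f x j))) eps.

Definition homeomorphic (I J : finType) (A : (I -> R) -> Prop)
  (B : (J -> R) -> Prop) : Prop :=
  exists (f : (I -> R) -> (J -> R)) (g : (J -> R) -> (I -> R)),
    (forall x, A x -> B (f x)) /\ (forall y, B y -> A (g y)) /\
    (forall x, A x -> forall i, g (f x) i = x i) /\
    (forall y, B y -> forall j, f (g y) j = y j) /\
    cont_on A f /\ cont_on B g.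

(* d-colexes, by recursion on d.
   - 0-colex: a finite set of points.
   - (d'+1)-colex L: a homogeneous simplicial (d'+1)-complex with a proper
     (d'+2)-coloring, which is a union of colorable balls z * K_z (z in Z,
     K_z a d'-colex homeomorphic to S^{d'}, z not a vertex of K_z), every
     top simplex of L lying in exactly one ball, every d'-simplex lying on
     some ball boundary lying on exactly two ball boundaries; and (standing
     structure) for every vertex v the set of top simplices containing v
     is a colorable ball centered at v. *)
Fixpoint colex (V : finType) (d : nat) (L : {set {set V}}) : Prop :=
  match d with
  | 0 => forall s, s \in L -> #|s| == 1
  | d'.+1 =>
    homogeneous d L /\
    (exists col : V -> 'I_d.+1, proper_coloring L col) /\
    (exists (Z : {set V}) (Kz : V -> {set {set V}}),
       (forall z, z \in Z ->
          [/\ colex d' (Kz z),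
              homeomorphic (realization (Kz z)) (@sphere_pt d'),
              ~~ is_vertex (Kz z) z &
              cone_top z (Kz z) d' \subset simplices L d]) /\
       (forall D, D \in simplices L d ->
          #|[set z in Z | D \in cone_top z (Kz z) d']| == 1) /\
       (forall r, (exists2 z, z \in Z & r \in simplices (Kz z) d') ->
          #|[set z in Z | r \in Kz z]| == 2)) /\
    (forall v, is_vertex L v ->
       exists K : {set {set V}},
         [/\ colex d' K,
             homeomorphic (realization K) (@sphere_pt d'),
             ~~ is_vertex K v &
             star L d [set v] = cone_top v K d'])
  end.

(* F_2-chains are identified with subsets; addition is symmetric difference *)
Definition symdiff (T : finType) (A B : {set T}) : {set T} :=
  (A :\: B) :|: (B :\: A).

Definition linext (T U : finType) (f : T -> {set U}) (c : {set T}) : {set U} :=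
  \big[@symdiff U/set0]_(x in c) f x.

Section Maps.
Variable V : finType.

(* generalized boundary map partial_{j,n} (for j <> n) on basis elements *)
Definition gbd_basis (L : {set {set V}}) (j n : nat) (s : {set V}) :=
  if n < j then faces_of s n else star L n s.

Definition gbd (L : {set {set V}}) (j n : nat) (c : {set {set V}}) :=
  linext (gbd_basis L j n) c.

(* cells of the restricted lattice L_C: inl i = the simplex i,
   inr D = the symbol Xi(D) *)
Definition cell := ({set V} + {set V})%type.

Variable d : nat.
Variable col : V -> 'I_d.+1.

Definition colset (s : {set V}) : {set 'I_d.+1} := col @: s.

(* boundary maps of L_C on basis cells:
   partial^C_i (i-cells, 1 <= i <= k) and partial^C_{k+1} (Xi cells) *)
Definition bdC_basis (L : {set {set V}}) (k i : nat) (x : cell) : {set cell} :=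
  match x with
  | inl s => inl @: faces_of s i.-1
  | inr D => inl @: link L d k D
  end.

Definition bdC (L : {set {set V}}) (k i : nat) (c : {set cell}) :=
  linext (bdC_basis L k i) c.

Definition pi0_basis (C : {set 'I_d.+1}) (m : {set V}) : {set cell} :=
  if colset m \subset C then [set inl m] else set0.
Definition pi0 C := linext (pi0_basis C).

Definition restr (C : {set 'I_d.+1}) (D : {set V}) : {set V} :=
  [set v in D | col v \in C].
Definition pi1_basis (C : {set 'I_d.+1}) (D : {set V}) : {set cell} :=
  [set inl (restr C D)].
Definition pi1 C := linext (pi1_basis C).

Definition pi2_basis (C : {set 'I_d.+1}) (n : {set V}) : {set cell} :=
  if colset n == ~: C then [set inr n] else set0.
Definition pi2 C := linext (pi2_basis C).

End Maps.

(* All maps are linear extensions of maps on basis elements, so both squares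
   are checked on a single simplex after composing linear extensions
   ([linext_comp]).
   - First square: the (k-1)-faces of a top simplex D colored inside C are
     exactly the (k-1)-faces of D|_C ([pi0_faces]).
   - Second square, on a (d-k-1)-simplex s.  If col(s) = ~: C, every top
     simplex through s is s :|: D|_C, so restriction to C is a bijection from
     the star of s onto its k-link ([restr_star_inj], [restr_star_link]).
     Otherwise s shares a color of C with each t = D|_C, so s :|: t is a
     nonempty non-top simplex and the top simplices restricting to t are the
     cofaces of s :|: t, an even number ([restr_fiber_even]).
   The evenness is the pseudomanifold property of colexes
   ([colex_even_cofaces]), proved by induction on the dimension: cofaces of s
   through a vertex v correspond to cofaces in the link sphere of v, and a
   colex sphere has an even number of top simplices -- two points for S^0
   ([zero_sphere_card]), a sum of even vertex stars in positive dimension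
   ([tops_by_color0]). *)
From HB Require Import structures.
From Stdlib Require Import Reals Lra FunctionalExtensionality.
From mathcomp Require Import all_boot zify.

Set Implicit Arguments.
Unset Strict Implicit.
Unset Printing Implicit Defensive.

Lemma symdiff_mem (T : finType) (A B : {set T}) x :
  (x \in symdiff A B) = (x \in A) (+) (x \in B).
Proof. by rewrite /symdiff !inE; case: (x \in A); case: (x \in B). Qed.

Lemma linext_mem (T U : finType) (f : T -> {set U}) c x :
  (x \in linext f c) = \big[addb/false]_(y in c) (x \in f y).
Proof.
rewrite /linext.
apply: (big_rec2 (fun (S : {set U}) (b : bool) => (x \in S) = b)); first by rewrite inE.
by move=> y S b _ IH; rewrite symdiff_mem IH.
Qed.

Lemma linext_eq (T U : finType) (f1 f2 : T -> {set U}) (c : {set T}) :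
  {in c, f1 =1 f2} -> linext f1 c = linext f2 c.
Proof. by move=> H; apply: eq_bigr => y /H. Qed.

Lemma linext_set0 (T U : finType) (f : T -> {set U}) : linext f set0 = set0.
Proof. by apply/setP => z; rewrite linext_mem big_set0 inE. Qed.

Lemma linext_set1 (T U : finType) (f : T -> {set U}) x : linext f [set x] = f x.
Proof. by apply/setP => z; rewrite linext_mem big_set1. Qed.

Lemma big_addb_andr (T : finType) (A : {pred T}) (P : T -> bool) b :
  (\big[addb/false]_(i in A) P i) && b = \big[addb/false]_(i in A) (P i && b).
Proof.
case: b; last by rewrite andbF big1 // => i _; rewrite andbF.
by rewrite andbT; apply: eq_bigr => i _; rewrite andbT.
Qed.

Lemma linext_comp (T U W : finType) (f : T -> {set U}) (g : U -> {set W}) c :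
  linext g (linext f c) = linext (fun y => linext g (f y)) c.
Proof.
apply/setP => z; rewrite !linext_mem big_mkcond /=.
under eq_bigr => m _ do
  rewrite linext_mem -[if _ then _ else _]/((_ : bool) && _) big_addb_andr.
rewrite exchange_big /=; apply: eq_bigr => y _.
rewrite linext_mem [RHS]big_mkcond /=.
by apply: eq_bigr => m _; case: (m \in f y).
Qed.

Lemma sum_bool_card (T : finType) (A : {set T}) (P : pred T) :
  \sum_(i in A) (P i : nat) = #|[set i in A | P i]|.
Proof.
rewrite -sum1_card big_mkcond [RHS]big_mkcond /=; apply: eq_bigr => i _.
by rewrite inE; case: (i \in A); case: (P i).
Qed.

Lemma big_addb_odd (T : finType) (A : {set T}) (P : pred T) :
  \big[addb/false]_(i in A) P i = odd #|[set i in A | P i]|.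
Proof.
rewrite -sum_bool_card (big_morph odd oddD (erefl (odd 0))).
by apply: eq_bigr => i _; rewrite oddb.
Qed.

Lemma big_addb_inj (T U : finType) (A : {set T}) (f : T -> U) y :
  {in A &, injective f} ->
  \big[addb/false]_(x in A) (y == f x) = (y \in f @: A).
Proof.
move=> f_inj; case: (boolP (y \in f @: A)) => [/imsetP[x0 Ax0 ->]|Hy].
  rewrite (bigD1 x0 Ax0) eqxx big1 // => x /andP[Ax Hx].
  by apply/negbTE; apply: contra Hx => /eqP/f_inj-> //.
by rewrite big1 // => x Ax; apply/negbTE; apply: contra Hy => /eqP->; apply: imset_f.
Qed.

Lemma sum_even (T : finType) (A : {pred T}) (F : T -> nat) :
  (forall i, A i -> ~~ odd (F i)) -> ~~ odd (\sum_(i in A) F i).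
Proof.
move=> H; apply: (big_ind (fun n => ~~ odd n)) => // x y Hx Hy.
by rewrite oddD (negbTE Hx) (negbTE Hy).
Qed.

Lemma coloring_inj (V : finType) n (L : {set {set V}}) (col : V -> 'I_n) D :
  is_complex L -> proper_coloring L col -> D \in L -> {in D &, injective col}.
Proof.
move=> [_ Lclosed] Hcol HD u v Hu Hv Euv; apply/eqP; apply: contraT => Huv.
have Hedge : [set u; v] \in L.
  apply: (Lclosed D) => //; first by apply/subsetP => x; rewrite !inE => /orP[]/eqP->.
  by apply/set0Pn; exists u; rewrite !inE eqxx.
by move: (Hcol u v Hedge Huv); rewrite Euv eqxx.
Qed.

Lemma top_simplex_colors (V : finType) n (L : {set {set V}}) (col : V -> 'I_n.+1) D :
  is_complex L -> proper_coloring L col -> D \in simplices L n ->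
  col @: D = [set: 'I_n.+1].
Proof.
move=> Hc Hcol; rewrite inE => /andP[HD /eqP cardD].
apply/eqP; rewrite eqEcard subsetT /= cardsT card_ord.
by rewrite (card_in_imset (coloring_inj Hc Hcol HD)) cardD.
Qed.

Lemma sub_restr (V : finType) d (col : V -> 'I_d.+1) C (D t : {set V}) :
  (t \subset restr col C D) = (t \subset D) && (colset col t \subset C).
Proof.
apply/idP/andP => [/subsetP H | [/subsetP H1 /subsetP H2]].
  split; apply/subsetP => x; first by move/H; rewrite inE => /andP[].
  by case/imsetP => y /H; rewrite inE => /andP[_ ?] ->.
by apply/subsetP => x Hx; rewrite inE H1 //= H2 // imset_f.
Qed.

Lemma restr_sub (V : finType) d (col : V -> 'I_d.+1) C (D : {set V}) :
  restr col C D \subset D.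
Proof. by apply/subsetP => v; rewrite inE => /andP[]. Qed.

Section Restriction.
Variables (V : finType) (d : nat) (L : {set {set V}}).
Variables (col : V -> 'I_d.+1) (C : {set 'I_d.+1}).
Hypothesis L_complex : is_complex L.
Hypothesis col_proper : proper_coloring L col.

Lemma restr_card D : D \in simplices L d -> #|restr col C D| = #|C|.
Proof.
move=> HD; have HDL : D \in L by move: HD; rewrite inE => /andP[].
have Hinj : {in restr col C D &, injective col}.
  apply: (sub_in2 (subsetP (restr_sub col C D))).
  exact: coloring_inj L_complex col_proper HDL.
rewrite -(card_in_imset Hinj); apply: eq_card => c0; apply/imsetP/idP.
  by case=> v; rewrite inE => /andP[_ Hv] ->.
move=> Hc0; have : c0 \in col @: D by rewrite (top_simplex_colors L_complex col_proper HD) inE.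
by case/imsetP => v Hv E; exists v => //; rewrite inE Hv -E Hc0.
Qed.

Lemma top_split (D s : {set V}) : D \in simplices L d -> s \subset D ->
  colset col s = ~: C -> D = s :|: restr col C D.
Proof.
move=> HD HsD Hcs; have HDL : D \in L by move: HD; rewrite inE => /andP[].
apply/eqP; rewrite eqEsubset subUset HsD (restr_sub col C D) !andbT.
apply/subsetP => v Hv; rewrite inE; case: (boolP (col v \in C)) => Hcv.
  by rewrite inE Hv Hcv orbT.
have : col v \in colset col s by rewrite Hcs inE.
case/imsetP => w Hw E.
by rewrite (coloring_inj L_complex col_proper HDL Hv (subsetP HsD w Hw) E) Hw.
Qed.

End Restriction.

Lemma Rplus_associative : associative Rplus.
Proof. by move=> x y z; rewrite Rplus_assoc. Qed.
HB.instance Definition _ :=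
  Monoid.isComLaw.Build R R0 Rplus Rplus_associative Rplus_comm Rplus_0_l.

Section ZeroColex.
Variables (V : finType) (K : {set {set V}}).
Hypothesis K_colex : colex 0 K.

Definition vertex_point (v : V) : V -> R := fun w => if w == v then R1 else R0.

Lemma vertex_point_realization v : [set v] \in K -> realization K (vertex_point v).
Proof.
move=> Hv; split; first by move=> w; rewrite /vertex_point; case: (w == v); lra.
split; last by exists [set v] => // w; rewrite /vertex_point inE; case: (w == v).
rewrite /rsum (bigD1 v) //= /vertex_point eqxx big1 => [|w /negbTE -> //]; lra.
Qed.

Lemma realization_vertex_point x : realization K x ->
  exists2 v, [set v] \in K & forall w, x w = vertex_point v w.
Proof.
move=> [x_ge0 [x_sum [s Hs x_supp]]].
case/cards1P: (K_colex Hs) => v Es; exists v; first by rewrite -Es.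
have x_out : forall w, w != v -> x w = R0.
  move=> w Hw; case: (Req_dec (x w) R0) => // /x_supp.
  by rewrite Es inE (negbTE Hw).
move=> w; rewrite /vertex_point; case: eqP => [->|/eqP Hw]; last exact: x_out.
by move: x_sum; rewrite /rsum (bigD1 v) //= big1 => [|w' /x_out //]; lra.
Qed.

Lemma sphere0P (y : 'I_1 -> R) : sphere_pt y <-> Rmult (y ord0) (y ord0) = R1.
Proof. by rewrite /sphere_pt /rsum big_ord1. Qed.

(* A 0-colex homeomorphic to the 0-sphere has exactly two points: the two
   points of S^0 are sent to distinct vertices, and every vertex is sent to
   one of the two points of S^0. *)
Lemma zero_sphere_card :
  homeomorphic (realization K) (@sphere_pt 0) -> #|simplices K 0| = 2.
Proof.
move=> [f [g [f_into [g_into [gK [fK _]]]]]].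
pose y_of (r : R) := fun _ : 'I_1 => r.
have north : sphere_pt (y_of R1) by apply/sphere0P; rewrite /y_of; lra.
have south : sphere_pt (y_of (Ropp R1)) by apply/sphere0P; rewrite /y_of; lra.
have [a Ha Ea] := realization_vertex_point (g_into _ north).
have [b Hb Eb] := realization_vertex_point (g_into _ south).
have a_neq_b : a != b.
  apply/eqP => Eab.
  have Eg : g (y_of R1) = g (y_of (Ropp R1)).
    by apply: functional_extensionality => w; rewrite Ea Eb Eab.
  move: (fK _ north ord0) (fK _ south ord0); rewrite Eg /y_of => ->; lra.
have vertex_ab : forall v, [set v] \in K -> v = a \/ v = b.
  move=> v Hv; have Pv := vertex_point_realization Hv.
  set r := f (vertex_point v) ord0.
  have fv : f (vertex_point v) = y_of r.
    by apply: functional_extensionality => j; rewrite (ord1 j).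
  have gfv : g (y_of r) v = R1 by rewrite -fv gK // /vertex_point eqxx.
  have /sphere0P r_sq : sphere_pt (y_of r) by rewrite -fv; apply: f_into.
  have [r1|r1] : r = R1 \/ r = Ropp R1.
    have : Rmult (Rminus r R1) (Rplus r R1) = R0 by rewrite /y_of in r_sq; lra.
    by case/Rmult_integral => ?; [left|right]; lra.
  by move: gfv; rewrite r1 Ea /vertex_point; case: eqP => [->|_]; [left | lra].
  by move: gfv; rewrite r1 Eb /vertex_point; case: eqP => [->|_]; [right | lra].
have -> : simplices K 0 = [set [set a]; [set b]].
  apply/setP => s; rewrite !inE; apply/andP/orP.
    case=> Hs /cards1P [v Es]; rewrite Es in Hs *.
    by case: (vertex_ab v Hs) => ->; [left|right].
  by case=> /eqP ->; rewrite cards1.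
rewrite cards2; congr (_.+1); apply/eqP; rewrite eqb1.
by apply: contra a_neq_b => /eqP /set1_inj ->.
Qed.

End ZeroColex.

Lemma colex_vertex (V : finType) d (K : {set {set V}}) t v :
  colex d K -> t \in K -> v \in t -> is_vertex K v.
Proof.
case: d => [|d] /= HK Ht Hv.
  by case/cards1P: (HK t Ht) => x Ex; move: Ht Hv; rewrite Ex inE => ? /eqP ->.
case: HK => [[[_ Kclosed] _] _]; apply: (Kclosed t) => //; first by rewrite sub1set.
by apply/set0Pn; exists v; rewrite inE.
Qed.

(* Each top simplex of a properly (n+1)-colored n-complex has exactly one
   vertex of color 0, so the top simplices are counted by the stars of the
   vertices of color 0. *)
Lemma tops_by_color0 (V : finType) n (K : {set {set V}}) (colK : V -> 'I_n.+1) :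
  is_complex K -> proper_coloring K colK ->
  #|simplices K n| = \sum_(u in [set u | colK u == ord0]) #|star K n [set u]|.
Proof.
move=> Hc Hcol.
under [RHS]eq_bigr => u _ do rewrite -sum_bool_card.
rewrite exchange_big /= -sum1_card; apply: eq_bigr => t Ht.
under eq_bigr => u _ do rewrite sub1set.
rewrite sum_bool_card.
have : ord0 \in colK @: t by rewrite (top_simplex_colors Hc Hcol Ht) inE.
case/imsetP => u0 Hu0 Ecol0.
have Hinj : {in t &, injective colK}.
  by apply: (coloring_inj Hc Hcol); move: Ht; rewrite inE => /andP[].
suff -> : [set i in [set u | colK u == ord0] | i \in t] = [set u0] by rewrite cards1.
apply/setP => x; rewrite !inE; apply/andP/eqP => [[/eqP Ex Hx]|->].
  by apply: Hinj => //; rewrite Ex.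
by rewrite -Ecol0.
Qed.

(* If the star of v is the cone v * K, then the top simplices containing a
   simplex s through v correspond, via t |-> v |: t, to the top simplices
   of K containing s minus v. *)
Lemma star_cone_card (V : finType) n (L K : {set {set V}}) (v : V) (s : {set V}) :
  (forall t, t \in simplices K n -> v \notin t) ->
  star L n.+1 [set v] = cone_top v K n -> v \in s ->
  #|star L n.+1 s| = #|star K n (s :\ v)|.
Proof.
move=> v_out Hstar Hv.
rewrite -[RHS](@card_in_imset _ _ (fun t => v |: t)); last first.
  move=> t1 t2 /setIdP[H1 _] /setIdP[H2 _] E.
  by rewrite -(setU1K (v_out _ H1)) -(setU1K (v_out _ H2)) E.
apply: eq_card => D; apply/idP/imsetP.
  move=> /setIdP[HD HsD].
  have : D \in star L n.+1 [set v] by rewrite inE HD sub1set (subsetP HsD).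
  rewrite Hstar => /imsetP[t Ht ED]; rewrite ED in HsD; exists t => //.
  apply/setIdP; split => //; apply/subsetP => x /setD1P [Hxv Hx].
  by case/setU1P: (subsetP HsD x Hx) => // Exv; rewrite Exv eqxx in Hxv.
case=> t /setIdP[Ht Hst] ->.
have : v |: t \in star L n.+1 [set v] by rewrite Hstar; apply: imset_f.
case/setIdP => HvD _; apply/setIdP; split => //.
apply/subsetP => x Hx; apply/setU1P; case: (eqVneq x v) => Hxv; [by left|right].
by apply: (subsetP Hst); apply/setD1P.
Qed.

(* The pseudomanifold property of colexes, in the form needed here: every
   nonempty non-top simplex s lies in an even number of top simplices. *)
Definition even_cofaces (n : nat) : Prop :=
  forall (V : finType) (L : {set {set V}}) (s : {set V}),
    colex n L -> s != set0 -> #|s| <= n -> ~~ odd #|star L n s|.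

(* A colex homeomorphic to a sphere has an even number of top simplices:
   S^0 has two points, and in positive dimension the top simplices are
   counted by vertex stars, which are even. *)
Lemma sphere_tops_even n (V : finType) (K : {set {set V}}) :
  even_cofaces n -> colex n K -> homeomorphic (realization K) (@sphere_pt n) ->
  ~~ odd #|simplices K n|.
Proof.
case: n => [|n] IH HK Hsphere; first by rewrite (zero_sphere_card HK Hsphere).
have [[K_complex _] [[colK colK_proper] _]] := HK.
rewrite (tops_by_color0 K_complex colK_proper); apply: sum_even => u _.
by apply: IH; rewrite ?cards1 //; apply/set0Pn; exists u; rewrite inE.
Qed.

(* Induction step: the top simplices of L through s are those of the
   vertex link K of some v in s through s minus v, and K is a sphere. *)
Lemma even_cofacesS n : even_cofaces n -> even_cofaces n.+1.
Proof.
move=> IH V L s HL s_nz s_card.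
case: (set_0Vmem (star L n.+1 s)) => [-> | [D0 HD0]]; first by rewrite cards0.
have [[[_ Lclosed] _] [_ [_ vertex_star]]] := HL.
case/set0Pn: s_nz => v Hv.
have v_vertex : is_vertex L v.
  move: HD0; rewrite !inE => /andP[/andP[HD0 _] HsD0].
  apply: (Lclosed D0) => //; first by rewrite sub1set (subsetP HsD0).
  by apply/set0Pn; exists v; rewrite inE.
have [K [HK Ksphere v_notK Hstar]] := vertex_star v v_vertex.
have v_out : forall t, t \in simplices K n -> v \notin t.
  move=> t; rewrite inE => /andP[Ht _]; apply: contra v_notK.
  exact: colex_vertex HK Ht.
rewrite (star_cone_card v_out Hstar Hv).
case: (eqVneq (s :\ v) set0) => [sv0 | sv_nz].
  have -> : star K n (s :\ v) = simplices K n.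
    by apply/setP => t; rewrite inE sv0 sub0set andbT.
  exact: sphere_tops_even IH HK Ksphere.
by apply: IH => //; move: s_card; rewrite (cardsD1 v s) Hv add1n ltnS.
Qed.

Lemma colex_even_cofaces n : even_cofaces n.
Proof.
elim: n => [|n IH]; last exact: even_cofacesS.
by move=> V L s _; rewrite -card_gt0; case: #|s|.
Qed.

Lemma big_addb_pick (T : finType) (A : {set T}) (P : pred T) t :
  \big[addb/false]_(m in A) ((m == t) && P m) = (t \in A) && P t.
Proof.
case: (boolP (t \in A)) => Ht /=; last first.
  by rewrite big1 // => m Hm; case: eqP => // Emt; rewrite -Emt Hm in Ht.
rewrite (bigD1 t Ht) eqxx /= big1 ?addbF // => m /andP[_ /negbTE->].
done.
Qed.

Section ChainMap.
Variables (V : finType) (d : nat) (L : {set {set V}}).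
Variables (col : V -> 'I_d.+1) (C : {set 'I_d.+1}).

Lemma pi1_mem (c : {set {set V}}) (x : cell V) :
  (x \in pi1 col C c) =
  if x is inl t then \big[addb/false]_(D in c) (t == restr col C D) else false.
Proof.
rewrite linext_mem; case: x => [t|t]; last by rewrite big1 // => D _; rewrite inE.
by apply: eq_bigr => D _; rewrite inE; apply/eqP/eqP => [[]|->].
Qed.

Lemma pi0_basis_mem (m t : {set V}) :
  (inl t \in pi0_basis col C m) = (m == t) && (colset col m \subset C).
Proof.
rewrite /pi0_basis; case: ifP => _; rewrite ?inE ?andbT ?andbF //.
by apply/eqP/eqP => [[]|->].
Qed.

Lemma pi0_faces (D : {set V}) n :
  linext (pi0_basis col C) (faces_of D n) = inl @: faces_of (restr col C D) n.
Proof.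
apply/setP => x; rewrite linext_mem; case: x => [t|t]; last first.
  rewrite big1; last by move=> m _; rewrite /pi0_basis; case: ifP; rewrite inE.
  by apply/esym/imsetP => [[]].
rewrite mem_imset; last by move=> ? ? [].
under eq_bigr => m _ do rewrite pi0_basis_mem.
by rewrite big_addb_pick !inE sub_restr -!andbA [_ && (_ \subset C)]andbC.
Qed.

Lemma chain_map_faces k i (c : {set {set V}}) :
  i.-1 < d -> pi0 col C (gbd L d i.-1 c) = bdC d L k i (pi1 col C c).
Proof.
move=> Hi; rewrite /pi0 /gbd /bdC /pi1 !linext_comp.
by apply: linext_eq => D _; rewrite linext_set1 /gbd_basis Hi pi0_faces.
Qed.

End ChainMap.

Section LinkSquare.
Variables (V : finType) (d k : nat) (L : {set {set V}}).
Variables (col : V -> 'I_d.+1) (C : {set 'I_d.+1}).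
Hypothesis L_complex : is_complex L.
Hypothesis col_proper : proper_coloring L col.
Hypothesis C_card : #|C| = k.+1.

Let simplex_in_L n D : D \in simplices L n -> D \in L.
Proof. by rewrite inE => /andP[]. Qed.

Lemma restr_star_inj (s : {set V}) :
  colset col s = ~: C -> {in star L d s &, injective (restr col C)}.
Proof.
move=> Hcs D1 D2 /setIdP[HD1 HsD1] /setIdP[HD2 HsD2] E.
by rewrite (top_split L_complex col_proper HD1 HsD1 Hcs) E
           -(top_split L_complex col_proper HD2 HsD2 Hcs).
Qed.

Lemma restr_star_link (s : {set V}) :
  colset col s = ~: C -> restr col C @: star L d s = link L d k s.
Proof.
move=> Hcs; apply/setP => t; apply/imsetP/idP.
  case=> D /setIdP[HD HsD] ->; have HDL := simplex_in_L HD.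
  have t_card : #|restr col C D| = k.+1.
    by rewrite (restr_card C L_complex col_proper HD).
  rewrite !inE t_card eqxx andbT; apply/and3P; split.
  - case: L_complex => _ Lclosed; apply: (Lclosed D) => //; first exact: restr_sub.
    by rewrite -card_gt0 t_card.
  - rewrite disjoint_subset; apply/subsetP => v; rewrite inE => /andP[_ Hv].
    rewrite inE; apply: contraL Hv => Hvs.
    have : col v \in colset col s by apply: imset_f.
    by rewrite Hcs inE.
  - by apply/existsP; exists D; rewrite HD restr_sub HsD.
case/setIdP => /setIdP[_ /eqP t_card] /andP[t_disj /existsP[D /and3P[HD HtD HsD]]].
have HDL := simplex_in_L HD.
exists D; first by apply/setIdP.
apply/eqP; rewrite eqEcard (restr_card C L_complex col_proper HD) C_card.
rewrite -t_card leqnn andbT.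
apply/subsetP => v Hv; rewrite inE (subsetP HtD v Hv) /=.
apply: contraT => Hcv; have : col v \in colset col s by rewrite Hcs inE.
case/imsetP => w Hw Evw.
have Ew := coloring_inj L_complex col_proper HDL (subsetP HtD v Hv) (subsetP HsD w Hw) Evw.
by move: t_disj; rewrite disjoint_subset => /subsetP /(_ v Hv); rewrite inE Ew Hw.
Qed.

Lemma restr_fiber (s t D0 : {set V}) :
  D0 \in star L d s -> t = restr col C D0 ->
  [set D in star L d s | t == restr col C D] = star L d (s :|: t).
Proof.
move=> /setIdP[HD0 _] Et.
have tC : colset col t \subset C.
  by move: (subxx t); rewrite {2}Et sub_restr => /andP[].
apply/setP => D; apply/setIdP/setIdP => [[/setIdP[HD HsD] /eqP ->]|[HD HstD]].
  by split => //; rewrite subUset HsD restr_sub.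
move: HstD; rewrite subUset => /andP[HsD HtD]; split; first exact/setIdP.
rewrite eqEcard sub_restr HtD tC /= (restr_card C L_complex col_proper HD).
by rewrite Et (restr_card C L_complex col_proper HD0).
Qed.

Hypothesis L_colex : colex d L.
Hypothesis k_lt_d : k < d.

(* If s is not colored by the complement of C, it shares a color of C with
   every t = D|_C, so s :|: t is a nonempty non-top simplex and lies in an
   even number of top simplices. *)
Lemma restr_fiber_even (s t : {set V}) :
  s \in simplices L (d - k - 1) -> colset col s != ~: C ->
  ~~ odd #|[set D in star L d s | t == restr col C D]|.
Proof.
move=> Hs Hcs; set fiber := [set _ in _ | _].
case: (set_0Vmem fiber) => [-> | [D0]]; first by rewrite cards0.
case/setIdP => HD0s /eqP Et; rewrite /fiber (restr_fiber HD0s Et).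
have [HD0 HsD0] := setIdP HD0s.
have s_card : #|s| = d - k by rewrite (eqP (proj2 (setIdP Hs))); lia.
have t_card : #|t| = k.+1 by rewrite Et (restr_card C L_complex col_proper HD0).
have [w Hws Hwt] : exists2 w, w \in s & w \in t.
  have s_inj : {in s &, injective col}.
    apply: (sub_in2 (subsetP HsD0)).
    exact: coloring_inj L_complex col_proper (simplex_in_L HD0).
  have : ~~ (colset col s \subset ~: C).
    apply: contra Hcs => Hsub; rewrite eqEcard Hsub /= cardsCs setCK card_ord C_card.
    by rewrite /colset (card_in_imset s_inj) s_card; lia.
  case/subsetPn => c0 /imsetP [w Hw ->]; rewrite inE negbK => Hcw.
  by exists w; rewrite // Et inE (subsetP HsD0 w Hw) Hcw.
apply: colex_even_cofaces => //.
  by apply/set0Pn; exists w; rewrite inE Hws.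
have : 0 < #|s :&: t| by rewrite card_gt0; apply/set0Pn; exists w; rewrite inE Hws.
by rewrite cardsU s_card t_card; lia.
Qed.

Lemma pi1_star (s : {set V}) : s \in simplices L (d - k - 1) ->
  pi1 col C (star L d s) = bdC d L k k.+1 (pi2_basis col C s).
Proof.
move=> Hs; rewrite /pi2_basis; case: eqP => Hcs.
  rewrite /bdC linext_set1 /= -(restr_star_link Hcs); apply/setP => x.
  rewrite pi1_mem; case: x => [t|t]; last by apply/esym/imsetP => [[]].
  rewrite mem_imset; last by move=> ? ? [].
  exact: big_addb_inj (restr_star_inj Hcs).
rewrite /bdC linext_set0; apply/setP => x; rewrite pi1_mem inE; case: x => // t.
by rewrite big_addb_odd; apply/negbTE/restr_fiber_even => //; apply/eqP.
Qed.

Lemma chain_map_links (c : {set {set V}}) : c \subset simplices L (d - k - 1) ->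
  pi1 col C (gbd L (d - k - 1) d c) = bdC d L k k.+1 (pi2 col C c).
Proof.
move=> c_sub; rewrite /gbd /bdC /pi2 /pi1 !linext_comp.
apply: linext_eq => s s_in; rewrite /gbd_basis ifF; last first.
  by apply/negbTE; rewrite -leqNgt; lia.
exact (pi1_star (subsetP c_sub s s_in)).
Qed.

End LinkSquare.

Lemma colex_complex (V : finType) d (L : {set {set V}}) :
  0 < d -> colex d L -> is_complex L.
Proof. by case: d => // d _ [[]]. Qed.

Unset Implicit Arguments.
Set Strict Implicit.

Theorem lemma5 (V : finType) (d k : nat) (L : {set {set V}})
  (col : V -> 'I_d.+1) (C : {set 'I_d.+1}) :
  colex d L -> proper_coloring L col ->
  1 <= k -> k < d -> #|C| = k.+1 ->
  (forall c : {set {set V}}, c \subset simplices L d ->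
     pi0 col C (gbd L d k.-1 c) = bdC d L k k (pi1 col C c)) /\
  (forall c : {set {set V}}, c \subset simplices L (d - k - 1) ->
     pi1 col C (gbd L (d - k - 1) d c) = bdC d L k k.+1 (pi2 col C c)).
Proof.
move=> L_colex col_proper _ k_lt_d C_card.
have L_complex : is_complex L by apply: colex_complex L_colex; lia.
split=> c c_sub; first by apply: chain_map_faces; lia.
exact: chain_map_links L_complex col_proper C_card L_colex k_lt_d c c_sub.
Qed.
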